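(* Let $V$ be a finite set with $|V|=K$, let $\eta>0$, and let $\ell_1,\dots,\ell_T:V\to[0,\infty)$ be loss functions (so $\ell_t(i)\ge 0$ for all $t,i$). Let $q_1,\dots,q_T$ be the probability vectors $$q_t(i)=\frac{\exp(-\eta\sum_{s=1}^{t-1}\ell_s(i))}{\sum_{j\in V}\exp(-\eta\sum_{s=1}^{t-1}\ell_s(j))},\qquad i\in V.$$ For each $t$ let $S_t\subseteq V$ be such that $\ell_t(i)\le 1/\eta$ for all $i\in S_t$. Then for any $i^\star\in V$, $$\sum_{t=1}^T\sum_{i\in V}q_t(i)\ell_t(i)-\sum_{t=1}^T\ell_t(i^\star)\le\frac{\ln K}{\eta}+\eta\sum_{t=1}^T\Big(\sum_{i\in S_t}q_t(i)(1-q_t(i))\ell_t(i)^2+\sum_{i\notin S_t}q_t(i)\ell_t(i)^2\Big).$$ *)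

From mathcomp Require Import all_boot all_order all_algebra.
From mathcomp Require Import all_classical all_reals all_analysis.
Set Implicit Arguments. Unset Strict Implicit. Unset Printing Implicit Defensive.
Import Order.TTheory GRing.Theory Num.Theory.
Local Open Scope ring_scope.

Definition cumloss {R : realType} {V : finType} (l : nat -> V -> R) (t : nat) (i : V) : R :=
  \sum_(1 <= s < t) l s i.

Definition hedge_weights {R : realType} {V : finType} (eta : R) (l : nat -> V -> R)
  (t : nat) (i : V) : R :=
  expR (- eta * cumloss l t i) / \sum_(j : V) expR (- eta * cumloss l t j).

From mathcomp Require Import all_boot all_order all_algebra.
From mathcomp Require Import all_classical all_reals all_analysis.
From mathcomp Require Import ring lra.
Set Implicit Arguments.
Unset Strict Implicit.
Unset Printing Implicit Defensive.

Import Order.TTheory GRing.Theory Num.Theory.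
Local Open Scope ring_scope.

(* Track the potential W_t = sum_j exp(-eta L_{t-1}(j)), L being the cumulative
   loss: W_1 = K and W_{T+1} >= exp(-eta L_T(j)) for every j.  Each round
   multiplies W by sum_i q_t(i) exp(-eta l_t(i)), whose logarithm is at most
   -eta sum_i q_t(i) l_t(i) plus eta^2 times the second-moment term, so the
   logarithms telescope to the bound. *)

Section ExpBounds.
Variable R : realType.

Lemma expR_le_inv_subr (u : R) : u < 1 -> expR u <= (1 - u)^-1.
Proof.
move=> u_lt1; rewrite -[expR u]invrK lef_pV2 ?posrE ?invr_gt0 ?expR_gt0 ?subr_gt0 //.
by rewrite -expRN; exact: expR_ge1Dx.
Qed.

Lemma poly_bound_1_8 (u : R) : 0 <= u -> u <= 1/8 ->
  1 <= (1 + 8 * u + 64 * u ^+ 2) * (1 - u) ^+ 8.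
Proof. by move=> u_ge0 u_le; nra. Qed.

(* For 0 < y use exp y = exp(y/8)^8 <= (1 - y/8)^-8; 8 is the smallest power
   of two for which this stays below 1 + y + y^2 up to y = 1. *)
Lemma expR_le_1DxDsqr (y : R) : y <= 1 -> expR y <= 1 + y + y ^+ 2.
Proof.
move=> y_le1; have [y_le0|y_gt0] := leP y 0.
  have y1_gt0 : 0 < 1 - y by lra.
  have y_lt1 : y < 1 by lra.
  apply: le_trans (expR_le_inv_subr y_lt1) _.
  by rewrite -(@ler_pM2r _ (1 - y)) // mulVf ?gt_eqF //; nra.
set u := y / 8; have -> : y = 8%:R * u by rewrite /u; field.
have u_lt1 : u < 1 by rewrite /u; lra.
have u1_gt0 : 0 < 1 - u by lra.
rewrite expRM_natl; apply: (@le_trans _ _ ((1 - u)^-1 ^+ 8)).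
  apply: lerXn2r; last exact: expR_le_inv_subr.
    by rewrite nnegrE expR_ge0.
  by rewrite nnegrE invr_ge0 ltW.
rewrite exprVn -(@ler_pM2r _ ((1 - u) ^+ 8)) ?exprn_gt0 // mulVf ?expf_neq0 ?gt_eqF //.
have -> : (8 * u) ^+ 2 = 64 * u ^+ 2 :> R by ring.
by apply: poly_bound_1_8; rewrite /u; lra.
Qed.

Lemma ln_le_expRM_subr (c z : R) : 0 < z -> ln z <= expR c * z - 1 - c.
Proof.
move=> z_gt0; have ecz_gt0 : 0 < expR c * z by rewrite mulr_gt0 ?expR_gt0.
have : ln (expR c * z) <= expR c * z - 1.
  by rewrite -{1}[expR c * z](subrK 1) addrC le_ln1Dx //; lra.
by rewrite lnM ?posrE ?expR_gt0 // expRK; lra.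
Qed.

End ExpBounds.

Section SumBounds.
Variables (R : realType) (V : finType).
Implicit Types (S : {set V}) (f : V -> R).

Lemma sum_setC_split S f : \sum_i f i = \sum_(i in S) f i + \sum_(i in ~: S) f i.
Proof.
rewrite (bigID (mem S)) /=; congr (_ + _).
by apply: eq_bigl => i; rewrite inE.
Qed.

Lemma sum_sqr_le_sqr_sum S f : (forall i, 0 <= f i) ->
  \sum_(i in S) f i ^+ 2 <= (\sum_(i in S) f i) ^+ 2.
Proof.
move=> f_ge0; rewrite expr2 mulr_suml; apply: ler_sum => i iS.
rewrite expr2 ler_wpM2l // (bigD1 i) //= lerDl.
by apply: sumr_ge0 => j _.
Qed.

Lemma ln_sum_expN_le (q x : V -> R) S :
  (forall i, 0 <= q i) -> \sum_i q i = 1 -> (forall i, 0 <= x i) ->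
  (forall i, i \in S -> x i <= 1) ->
  ln (\sum_i q i * expR (- x i)) <= - \sum_i q i * x i +
     (\sum_(i in S) q i * (1 - q i) * x i ^+ 2 + \sum_(i in ~: S) q i * x i ^+ 2).
Proof.
move=> q_ge0 q_sum1 x_ge0 x_le1.
set Z := \sum_i q i * expR (- x i).
set c := \sum_(i in S) q i * x i; set N := \sum_(i in ~: S) q i * x i.
set A := \sum_i q i * x i; set B := \sum_i q i * x i ^+ 2.
set D := \sum_(i in S) (q i * x i) ^+ 2.
have qx_ge0 i : 0 <= q i * x i by rewrite mulr_ge0.
have c_ge0 : 0 <= c by apply: sumr_ge0.
have N_ge0 : 0 <= N by apply: sumr_ge0.
have c_le1 : c <= 1.
  rewrite -q_sum1 (sum_setC_split S) -[c]addr0 lerD ?sumr_ge0 //.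
  by apply: ler_sum => i iS; rewrite ler_piMr ?x_le1.
have AE : A = c + N by rewrite /A (sum_setC_split S).
have D_le : D <= c ^+ 2 by apply: sum_sqr_le_sqr_sum.
have -> : \sum_(i in S) q i * (1 - q i) * x i ^+ 2 + \sum_(i in ~: S) q i * x i ^+ 2
          = B - D.
  rewrite /B (sum_setC_split S) /D addrAC -sumrB.
  by congr (_ + _); apply: eq_bigr => i _; ring.
(* Shifting the exponent by c <= 1 keeps every c - x i <= 1 while the
   cross term -2 c A absorbs the missing -q i ^ 2 x i ^ 2 on S. *)
have ecZ : expR c * Z = \sum_i q i * expR (c - x i).
  by rewrite /Z mulr_sumr; apply: eq_bigr => i _; rewrite expRD; ring.
have Z_gt0 : 0 < Z.
  have : \sum_i q i != 0 by rewrite q_sum1 oner_neq0.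
  rewrite psumr_neq0 // => /hasP[i _ qi_gt0].
  rewrite /Z (bigD1 i) //= ltr_pwDl ?mulr_gt0 ?expR_gt0 //.
  by apply: sumr_ge0 => j _; rewrite mulr_ge0 ?expR_ge0.
have lnZ_le := ln_le_expRM_subr c Z_gt0.
have ecZ_le : expR c * Z <= 1 + c - A + c ^+ 2 - 2 * c * A + B.
  rewrite ecZ; apply: (@le_trans _ _ (\sum_i q i * (1 + (c - x i) + (c - x i) ^+ 2))).
    apply: ler_sum => i _; rewrite ler_wpM2l // expR_le_1DxDsqr //.
    by have := x_ge0 i; lra.
  rewrite le_eqVlt; apply/predU1l.
  rewrite (eq_bigr (fun i => q i + c * q i - q i * x i + c ^+ 2 * q i
                            - 2 * c * (q i * x i) + q i * x i ^+ 2)); last first.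
    by move=> i _; ring.
  by rewrite !big_split /= !sumrN -!mulr_sumr q_sum1 !mulr1.
have cN_ge0 : 0 <= c * N by rewrite mulr_ge0.
nra.
Qed.

End SumBounds.

Section Hedge.
Variables (R : realType) (V : finType) (eta : R) (l : nat -> V -> R).

Definition hedge_potential (t : nat) : R := \sum_j expR (- eta * cumloss l t j).

Definition hedge_loss (t : nat) : R := \sum_i hedge_weights eta l t i * l t i.

Definition hedge_second_moment (S : {set V}) (t : nat) : R :=
  \sum_(i in S) hedge_weights eta l t i * (1 - hedge_weights eta l t i) * l t i ^+ 2
  + \sum_(i in ~: S) hedge_weights eta l t i * l t i ^+ 2.

Lemma expR_cumloss_le_potential t i : expR (- eta * cumloss l t i) <= hedge_potential t.
Proof.
rewrite /hedge_potential (bigD1 i) //= lerDl.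
by apply: sumr_ge0 => j _; exact: expR_ge0.
Qed.

Lemma hedge_potential_gt0 (i0 : V) t : 0 < hedge_potential t.
Proof. exact: lt_le_trans (expR_gt0 _) (expR_cumloss_le_potential t i0). Qed.

Lemma hedge_potential1 : hedge_potential 1 = #|V|%:R.
Proof.
rewrite /hedge_potential; under eq_bigr do rewrite /cumloss big_geq // mulr0 expR0.
by rewrite sumr_const.
Qed.

Lemma hedge_weights_ge0 t i : 0 <= hedge_weights eta l t i.
Proof. by rewrite divr_ge0 ?expR_ge0 // sumr_ge0 // => j _; exact: expR_ge0. Qed.

Lemma sum_hedge_weights (i0 : V) t : \sum_i hedge_weights eta l t i = 1.
Proof. by rewrite -mulr_suml mulfV ?gt_eqF ?(hedge_potential_gt0 i0). Qed.

Lemma hedge_potentialS (i0 : V) t : (1 <= t)%N ->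
  hedge_potential t.+1 =
  hedge_potential t * \sum_i hedge_weights eta l t i * expR (- (eta * l t i)).
Proof.
move=> t_ge1; rewrite mulr_sumr; apply: eq_bigr => i _.
have Wt_neq0 := lt0r_neq0 (hedge_potential_gt0 i0 t).
rewrite /hedge_weights /cumloss big_nat_recr //= mulrDr expRD -/(hedge_potential t).
by rewrite mulrA mulrCA divff // mulr1 !mulNr.
Qed.

Lemma ln_hedge_potentialS_le (i0 : V) (S : {set V}) t :
  0 < eta -> (1 <= t)%N -> (forall i, 0 <= l t i) ->
  (forall i, i \in S -> l t i <= eta^-1) ->
  ln (hedge_potential t.+1) - ln (hedge_potential t)
    <= - eta * hedge_loss t + eta ^+ 2 * hedge_second_moment S t.
Proof.
move=> eta_gt0 t_ge1 l_ge0 l_leS.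
have W_gt0 := hedge_potential_gt0 i0.
have Z_gt0 : 0 < \sum_i hedge_weights eta l t i * expR (- (eta * l t i)).
  by have := W_gt0 t.+1; rewrite (hedge_potentialS i0 t_ge1) pmulr_rgt0.
rewrite (hedge_potentialS i0 t_ge1) lnM ?posrE // addrC addKr.
apply: le_trans (ln_sum_expN_le (x := fun i => eta * l t i) (S := S)
  (hedge_weights_ge0 t) (sum_hedge_weights i0 t) _ _) _.
- by move=> i; rewrite mulr_ge0 // ltW.
- by move=> i iS; rewrite -(mulfV (lt0r_neq0 eta_gt0)) ler_wpM2l ?l_leS // ltW.
rewrite /hedge_loss /hedge_second_moment mulNr mulrDr !mulr_sumr.
rewrite le_eqVlt; apply/predU1l.
by congr (- _ + (_ + _)); apply: eq_bigr => i _; ring.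
Qed.

End Hedge.

Theorem lemma4 (R : realType) (V : finType) (T : nat) (eta : R)
  (l : nat -> V -> R) (S : nat -> {set V}) (istar : V) :
  0 < eta ->
  (forall t i, (1 <= t <= T)%N -> 0 <= l t i) ->
  (forall t i, (1 <= t <= T)%N -> i \in S t -> l t i <= eta^-1) ->
  \sum_(1 <= t < T.+1) \sum_(i : V) hedge_weights eta l t i * l t i
    - \sum_(1 <= t < T.+1) l t istar
  <= ln (#|V|%:R) / eta
     + eta * \sum_(1 <= t < T.+1)
          ( \sum_(i in S t) hedge_weights eta l t i * (1 - hedge_weights eta l t i) * (l t i) ^+ 2
          + \sum_(i in ~: S t) hedge_weights eta l t i * (l t i) ^+ 2 ).
Proof.
move=> eta_gt0 l_ge0 l_leS.
set X := \sum_(1 <= t < T.+1) \sum_i _; set Y := \sum_(1 <= t < T.+1) l t istar.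
set M := \sum_(1 <= t < T.+1) _.
have telescoped :
    ln (hedge_potential eta l T.+1) - ln #|V|%:R <= - eta * X + eta ^+ 2 * M.
  rewrite -(hedge_potential1 eta l).
  rewrite -(telescope_sumr (fun t => ln (hedge_potential eta l t))) //.
  rewrite !mulr_sumr -big_split /=; apply: ler_sum_nat => t /andP[t_ge1 t_leT].
  rewrite -ltnS in t_leT.
  apply: (ln_hedge_potentialS_le istar eta_gt0 t_ge1) => i.
    by apply: l_ge0; rewrite t_ge1.
  by apply: l_leS; rewrite t_ge1.
have best_expert : - eta * Y <= ln (hedge_potential eta l T.+1).
  rewrite -[leLHS]expRK ler_ln ?posrE ?expR_gt0 ?(hedge_potential_gt0 _ _ istar) //.
  exact: expR_cumloss_le_potential.
rewrite -(ler_pM2l eta_gt0) [leRHS]mulrDr mulrCA divff ?lt0r_neq0 // mulr1.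
rewrite mulrA -expr2 mulrBr.
move: telescoped best_expert; rewrite !mulNr.
set LW := ln _; set lnK := ln _; set eX := eta * X; set eY := eta * Y.
by set eM := eta ^+ 2 * M; lra.
Qed.
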